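(* Let $\mathcal K$ be a variety of WHB-algebras that has a tense companion $\mathcal N$. Then $\mathcal K$ has equationally definable principal congruences if and only if $\mathcal N$ has equationally definable principal congruences.
   Context: A WHB-algebra is an algebra $(A,\wedge,\vee,\to,\leftarrow,0,1)$ such that $(A,\wedge,\vee,0,1)$ is a bounded distributive lattice and for all $a,b,c\in A$: $a\to a=1$; $a\to(b\wedge c)=(a\to b)\wedge(a\to c)$; $(a\vee b)\to c=(a\to c)\wedge(b\to c)$; $(a\to b)\wedge(b\to c)\le a\to c$; $a\leftarrow a=0$; $(a\vee b)\leftarrow c=(a\leftarrow c)\vee(b\leftarrow c)$; $a\leftarrow(b\wedge c)=(a\leftarrow b)\vee(a\leftarrow c)$; $a\leftarrow c\le(a\leftarrow b)\vee(b\leftarrow c)$; $a\wedge((a\to b)\leftarrow 0)\le b$; $a\le b\vee(1\to(a\leftarrow b))$. A tense algebra is $(\mathbf B,G,H)$ with $\mathbf B$ a Boolean algebra and unary $G,H$ such that, with $P(x)=\neg H(\neg x)$, $F(x)=\neg G(\neg x)$: $P(x)\le y\iff x\le G(y)$ and $F(x)\le y\iff x\le H(y)$. $M(\mathbf B,G,H)$ is the WHB-algebra on $B$ with $x\to y=G(\neg x\vee y)$, $x\leftarrow y=P(x\wedge\neg y)$. For a WHB-algebra $\mathbf A$: $X(\mathbf A)$ is its set of prime filters, $\sigma_{\mathbf A}(a)=\{P\colon a\in P\}$, $\tau_{\mathbf A}$ the topology with subbase $\{\sigma_{\mathbf A}(a)\}\cup\{X(\mathbf A)\setminus\sigma_{\mathbf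 A}(a)\}$; $(P,Q)\in R_{\mathbf A}$ iff for all $a,b$ ($a\to b\in P$, $a\in Q$ imply $b\in Q$); $(P,Q)\in S_{\mathbf A}$ iff for all $a,b$ ($a\in Q$, $b\notin Q$ imply $a\leftarrow b\in P$); $T(\mathbf A)$ is the Boolean algebra of $\tau_{\mathbf A}$-clopen subsets of $X(\mathbf A)$ with $G_{\mathbf A}(U)=\{P\colon R_{\mathbf A}(P)\subseteq U\}$, $H_{\mathbf A}(U)=\{P\colon S_{\mathbf A}(P)\subseteq U\}$. A variety $\mathcal N$ of tense algebras is a tense companion of a variety $\mathcal K$ of WHB-algebras if $T(\mathbf A)\in\mathcal N$ for all $\mathbf A\in\mathcal K$ and $M(\mathbf B)\in\mathcal N$... more precisely $M(\mathbf B)\in\mathcal K$ for all $\mathbf B\in\mathcal N$. A variety $\mathcal V$ has equationally definable principal congruences (EDPC) if there is a finite conjunction of equations $\zeta(x,y,u,v)$ in its language such that for every $\mathbf C\in\mathcal V$ and $a,b,c,d\in C$: $(c,d)$ belongs to the congruence of $\mathbf C$ generated by $(a,b)$ iff $\mathbf C\models\zeta[a,b,c,d]$. *)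

From Stdlib Require Import List.
Import ListNotations.
Set Implicit Arguments.

Record WStr := {
  wc :> Type;
  wmeet : wc -> wc -> wc;
  wjoin : wc -> wc -> wc;
  wimp  : wc -> wc -> wc;
  wcoimp : wc -> wc -> wc;
  wzero : wc;
  wone  : wc }.

Definition wle (A : WStr) (a b : A) : Prop := wmeet A a b = a.

Definition isWHB (A : WStr) : Prop :=
  let m := wmeet A in let j := wjoin A in
  let i := wimp A in let ci := wcoimp A in
  let z := wzero A in let o := wone A in
  (forall a b c, m a (m b c) = m (m a b) c) /\
  (forall a b c, j a (j b c) = j (j a b) c) /\
  (forall a b, m a b = m b a) /\
  (forall a b, j a b = j b a) /\
  (forall a b, m a (j a b) = a) /\
  (forall a b, j a (m a b) = a) /\
  (forall a b c, m a (j b c) = j (m a b) (m a c)) /\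
  (forall a, j a z = a) /\
  (forall a, m a o = a) /\
  (forall a, i a a = o) /\
  (forall a b c, i a (m b c) = m (i a b) (i a c)) /\
  (forall a b c, i (j a b) c = m (i a c) (i b c)) /\
  (forall a b c, wle A (m (i a b) (i b c)) (i a c)) /\
  (forall a, ci a a = z) /\
  (forall a b c, ci (j a b) c = j (ci a c) (ci b c)) /\
  (forall a b c, ci a (m b c) = j (ci a b) (ci a c)) /\
  (forall a b c, wle A (ci a c) (j (ci a b) (ci b c))) /\
  (forall a b, wle A (m a (ci (i a b) z)) b) /\
  (forall a b, wle A a (j b (i o (ci a b)))).

Record TStr := {
  tc :> Type;
  tmeet : tc -> tc -> tc;
  tjoin : tc -> tc -> tc;
  tneg  : tc -> tc;
  tzero : tc;
  tone  : tc;
  tG : tc -> tc;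
  tH : tc -> tc }.

Definition tle (B : TStr) (a b : B) : Prop := tmeet B a b = a.
Definition tP (B : TStr) (x : B) : B := tneg B (tH B (tneg B x)).
Definition tF (B : TStr) (x : B) : B := tneg B (tG B (tneg B x)).

Definition isBoolean (B : TStr) : Prop :=
  let m := tmeet B in let j := tjoin B in let n := tneg B in
  let z := tzero B in let o := tone B in
  (forall a b c, m a (m b c) = m (m a b) c) /\
  (forall a b c, j a (j b c) = j (j a b) c) /\
  (forall a b, m a b = m b a) /\
  (forall a b, j a b = j b a) /\
  (forall a b, m a (j a b) = a) /\
  (forall a b, j a (m a b) = a) /\
  (forall a b c, m a (j b c) = j (m a b) (m a c)) /\
  (forall a, j a z = a) /\
  (forall a, m a o = a) /\
  (forall a, m a (n a) = z) /\
  (forall a, j a (n a) = o).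

Definition isTense (B : TStr) : Prop :=
  isBoolean B /\
  (forall x y, tle B (tP B x) y <-> tle B x (tG B y)) /\
  (forall x y, tle B (tF B x) y <-> tle B x (tH B y)).

Inductive wterm : Type :=
| WVar : nat -> wterm
| WMeet : wterm -> wterm -> wterm
| WJoin : wterm -> wterm -> wterm
| WImp : wterm -> wterm -> wterm
| WCoimp : wterm -> wterm -> wterm
| WZero : wterm
| WOne : wterm.

Fixpoint weval (A : WStr) (v : nat -> A) (t : wterm) : A :=
  match t with
  | WVar n => v n
  | WMeet s u => wmeet A (weval A v s) (weval A v u)
  | WJoin s u => wjoin A (weval A v s) (weval A v u)
  | WImp s u => wimp A (weval A v s) (weval A v u)
  | WCoimp s u => wcoimp A (weval A v s) (weval A v u)
  | WZero => wzero A
  | WOne => wone A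
  end.

Inductive tterm : Type :=
| TVar : nat -> tterm
| TMeet : tterm -> tterm -> tterm
| TJoin : tterm -> tterm -> tterm
| TNeg : tterm -> tterm
| TZero : tterm
| TOne : tterm
| TGt : tterm -> tterm
| THt : tterm -> tterm.

Fixpoint teval (B : TStr) (v : nat -> B) (t : tterm) : B :=
  match t with
  | TVar n => v n
  | TMeet s u => tmeet B (teval B v s) (teval B v u)
  | TJoin s u => tjoin B (teval B v s) (teval B v u)
  | TNeg s => tneg B (teval B v s)
  | TZero => tzero B
  | TOne => tone B
  | TGt s => tG B (teval B v s)
  | THt s => tH B (teval B v s)
  end.

Definition wsat (A : WStr) (e : wterm * wterm) : Prop :=
  forall v : nat -> A, weval A v (fst e) = weval A v (snd e).
Definition tsat (B : TStr) (e : tterm * tterm) : Prop :=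
  forall v : nat -> B, teval B v (fst e) = teval B v (snd e).

Definition varietyW (K : WStr -> Prop) : Prop :=
  exists E : wterm * wterm -> Prop,
    forall A, K A <-> (isWHB A /\ forall e, E e -> wsat A e).
Definition varietyT (N : TStr -> Prop) : Prop :=
  exists E : tterm * tterm -> Prop,
    forall B, N B <-> (isTense B /\ forall e, E e -> tsat B e).

Definition equivR (X : Type) (r : X -> X -> Prop) : Prop :=
  (forall x, r x x) /\ (forall x y, r x y -> r y x) /\
  (forall x y z, r x y -> r y z -> r x z).

Definition congW (A : WStr) (r : A -> A -> Prop) : Prop :=
  equivR r /\
  (forall a b c d, r a b -> r c d -> r (wmeet A a c) (wmeet A b d)) /\
  (forall a b c d, r a b -> r c d -> r (wjoin A a c) (wjoin A b d)) /\
  (forall a b c d, r a b -> r c d -> r (wimp A a c) (wimp A b d)) /\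
  (forall a b c d, r a b -> r c d -> r (wcoimp A a c) (wcoimp A b d)).

Definition congT (B : TStr) (r : B -> B -> Prop) : Prop :=
  equivR r /\
  (forall a b c d, r a b -> r c d -> r (tmeet B a c) (tmeet B b d)) /\
  (forall a b c d, r a b -> r c d -> r (tjoin B a c) (tjoin B b d)) /\
  (forall a b, r a b -> r (tneg B a) (tneg B b)) /\
  (forall a b, r a b -> r (tG B a) (tG B b)) /\
  (forall a b, r a b -> r (tH B a) (tH B b)).

Definition CgW (A : WStr) (a b c d : A) : Prop :=
  forall r, congW A r -> r a b -> r c d.
Definition CgT (B : TStr) (a b c d : B) : Prop :=
  forall r, congT B r -> r a b -> r c d.

(* valuation x:=a, y:=b, u:=c, v:=d (variables 0,1,2,3; others read as v) *)
Definition val4 (X : Type) (a b c d : X) (n : nat) : X :=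
  match n with 0 => a | 1 => b | 2 => c | _ => d end.

Definition EDPC_W (K : WStr -> Prop) : Prop :=
  exists zeta : list (wterm * wterm),
    forall C, K C -> forall a b c d : C,
      CgW C a b c d <->
      Forall (fun e => weval C (val4 a b c d) (fst e) = weval C (val4 a b c d) (snd e)) zeta.

Definition EDPC_T (N : TStr -> Prop) : Prop :=
  exists zeta : list (tterm * tterm),
    forall C, N C -> forall a b c d : C,
      CgT C a b c d <->
      Forall (fun e => teval C (val4 a b c d) (fst e) = teval C (val4 a b c d) (snd e)) zeta.

Definition M (B : TStr) : WStr :=
  {| wc := B;
     wmeet := tmeet B; wjoin := tjoin B;
     wimp := fun x y => tG B (tjoin B (tneg B x) y);
     wcoimp := fun x y => tP B (tmeet B x (tneg B y));
     wzero := tzero B; wone := tone B |}.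

Definition primeFilter (A : WStr) (P : A -> Prop) : Prop :=
  P (wone A) /\
  (forall a b, P a -> wle A a b -> P b) /\
  (forall a b, P a -> P b -> P (wmeet A a b)) /\
  ~ P (wzero A) /\
  (forall a b, P (wjoin A a b) -> P a \/ P b).

Definition X (A : WStr) : Type := { P : A -> Prop | primeFilter A P }.

Definition sigma (A : WStr) (a : A) : X A -> Prop := fun P => proj1_sig P a.

Definition subbasic (A : WStr) (s : A * bool) : X A -> Prop :=
  fun P => if snd s then sigma (fst s) P else ~ sigma (fst s) P.

Definition tau_open (A : WStr) (U : X A -> Prop) : Prop :=
  forall P, U P -> exists l : list (A * bool),
    (forall s, In s l -> subbasic s P) /\
    (forall Q, (forall s, In s l -> subbasic s Q) -> U Q).

Definition clopen (A : WStr) (U : X A -> Prop) : Prop :=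
  tau_open U /\ tau_open (fun P => ~ U P).

Definition R_A (A : WStr) (P Q : X A) : Prop :=
  forall a b, proj1_sig P (wimp A a b) -> proj1_sig Q a -> proj1_sig Q b.
Definition S_A (A : WStr) (P Q : X A) : Prop :=
  forall a b, proj1_sig Q a -> ~ proj1_sig Q b -> proj1_sig P (wcoimp A a b).

Definition PT (A : WStr) : TStr :=
  {| tc := X A -> Prop;
     tmeet := fun U V P => U P /\ V P;
     tjoin := fun U V P => U P \/ V P;
     tneg := fun U P => ~ U P;
     tzero := fun _ => False;
     tone := fun _ => True;
     tG := fun U P => forall Q, R_A P Q -> U Q;
     tH := fun U P => forall Q, S_A P Q -> U Q |}.

Record closedT (B : TStr) (S : B -> Prop) : Prop := {
  cl_meet : forall x y, S x -> S y -> S (tmeet B x y);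
  cl_join : forall x y, S x -> S y -> S (tjoin B x y);
  cl_neg : forall x, S x -> S (tneg B x);
  cl_zero : S (tzero B);
  cl_one : S (tone B);
  cl_G : forall x, S x -> S (tG B x);
  cl_H : forall x, S x -> S (tH B x) }.

Definition subT (B : TStr) (S : B -> Prop) (h : closedT B S) : TStr :=
  {| tc := { x : B | S x };
     tmeet := fun x y => exist _ _ (cl_meet h _ _ (proj2_sig x) (proj2_sig y));
     tjoin := fun x y => exist _ _ (cl_join h _ _ (proj2_sig x) (proj2_sig y));
     tneg := fun x => exist _ _ (cl_neg h _ (proj2_sig x));
     tzero := exist _ _ (cl_zero h);
     tone := exist _ _ (cl_one h);
     tG := fun x => exist _ _ (cl_G h _ (proj2_sig x));
     tH := fun x => exist _ _ (cl_H h _ (proj2_sig x)) |}.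

(* "T(A) belongs to N": the clopens form a subalgebra of PT(A), and that
   subalgebra (which is T(A)) is in N *)
Definition T_in (N : TStr -> Prop) (A : WStr) : Prop :=
  exists h : closedT (PT A) (@clopen A), N (subT h).

Definition tense_companion (K : WStr -> Prop) (N : TStr -> Prop) : Prop :=
  (forall A, K A -> T_in N A) /\ (forall B, N B -> K (M B)).

(* Congruences of a tense algebra B are exactly those of the WHB-algebra M(B), so an EDPC
   formula for K translates termwise into one for N.  Conversely, in a tense algebra
   (c, d) lies in Cg(a, b) iff box^k (a <-> b) <= c <-> d for some k, where
   box x = x /\ G x /\ H x.  EDPC for N bounds k uniformly (a product of counterexamples
   would lie in N), and box^k (x <-> y) <= u <-> v can be written as finitely many WHB
   equations [zeta k].  For A in K, [zeta k] forces c = d modulo any congruence identifying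
   a and b, by a direct computation in A.  Conversely a |-> sigma(a) embeds A into M(T(A))
   with T(A) in N (by a prime filter theorem relative to R and S), and the principal
   congruence of T(A) generated by (sigma a, sigma b) pulls back to a congruence of A. *)

From Stdlib Require Import List Classical ClassicalEpsilon FunctionalExtensionality
  PropExtensionality ProofIrrelevance Arith Lia.
From mathcomp Require classical_sets.
Import ListNotations.

(** * Distributive lattices and Boolean algebras *)

Record DLattice {L : Type} (m j : L -> L -> L) (z o : L) : Prop := {
  meetA : forall a b c, m a (m b c) = m (m a b) c;
  joinA : forall a b c, j a (j b c) = j (j a b) c;
  meetC : forall a b, m a b = m b a;
  joinC : forall a b, j a b = j b a;
  meetKJ : forall a b, m a (j a b) = a;
  joinKM : forall a b, j a (m a b) = a;
  meetJr : forall a b c, m a (j b c) = j (m a b) (m a c);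
  join0 : forall a, j a z = a;
  meet1 : forall a, m a o = a }.

Arguments meetA {L m j z o}. Arguments joinA {L m j z o}. Arguments meetC {L m j z o}.
Arguments joinC {L m j z o}. Arguments meetKJ {L m j z o}. Arguments joinKM {L m j z o}.
Arguments meetJr {L m j z o}. Arguments join0 {L m j z o}. Arguments meet1 {L m j z o}.

Definition le {L : Type} (m : L -> L -> L) (a b : L) : Prop := m a b = a.

Section Lattice.
Context {L : Type} {m j : L -> L -> L} {z o : L} (HL : DLattice m j z o).

Lemma meetxx a : m a a = a.
Proof. rewrite <- (joinKM HL a a) at 2. apply (meetKJ HL). Qed.

Lemma le_joinE a b : le m a b <-> j a b = b.
Proof.
  unfold le; split; intros E; rewrite <- E.
  - rewrite (joinC HL), (meetC HL). apply (joinKM HL).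
  - apply (meetKJ HL).
Qed.

Lemma le_refl a : le m a a.
Proof. apply meetxx. Qed.

Lemma le_trans a b c : le m a b -> le m b c -> le m a c.
Proof. unfold le; intros E1 E2. rewrite <- E1, <- (meetA HL), E2. reflexivity. Qed.

Lemma le_antisym a b : le m a b -> le m b a -> a = b.
Proof. unfold le; intros E1 E2. rewrite <- E1, (meetC HL). exact E2. Qed.

Lemma leMl a b : le m (m a b) a.
Proof. unfold le. rewrite <- (meetA HL), (meetC HL b a), (meetA HL), meetxx. reflexivity. Qed.

Lemma leMr a b : le m (m a b) b.
Proof. unfold le. rewrite <- (meetA HL), meetxx. reflexivity. Qed.

Lemma leJl a b : le m a (j a b).
Proof. apply (meetKJ HL). Qed.

Lemma leJr a b : le m b (j a b).
Proof. unfold le. rewrite (joinC HL). apply (meetKJ HL). Qed.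

Lemma lexM a b c : le m a b -> le m a c -> le m a (m b c).
Proof. unfold le; intros E1 E2. rewrite (meetA HL), E1, E2. reflexivity. Qed.

Lemma leJx a b c : le m a c -> le m b c -> le m (j a b) c.
Proof.
  rewrite !le_joinE. intros E1 E2. rewrite <- (joinA HL), E2, E1. reflexivity.
Qed.

Lemma meet0 a : m a z = z.
Proof.
  rewrite (meetC HL). rewrite <- (meetKJ HL z a) at 2. rewrite (joinC HL), (join0 HL). reflexivity.
Qed.

Lemma join1 a : j a o = o.
Proof.
  rewrite (joinC HL). rewrite <- (joinKM HL o a) at 2. rewrite (meetC HL), (meet1 HL). reflexivity.
Qed.

Lemma le0x a : le m z a.
Proof. unfold le. rewrite (meetC HL). apply meet0. Qed.

Lemma lex1 a : le m a o.
Proof. apply (meet1 HL). Qed.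

Lemma le0_eq a : le m a z -> a = z.
Proof. unfold le. intros <-. apply meet0. Qed.

Lemma le1_eq a : le m o a -> a = o.
Proof. intros E. apply le_antisym; [apply lex1 | exact E]. Qed.

Lemma joinMr a b c : j a (m b c) = m (j a b) (j a c).
Proof.
  rewrite (meetJr HL (j a b) a c), (meetC HL (j a b) a), (meetKJ HL).
  rewrite (meetC HL (j a b) c), (meetJr HL c a b), (joinA HL), (meetC HL c a).
  rewrite (joinKM HL), (meetC HL c b). reflexivity.
Qed.

Lemma meetJl a b c : m (j b c) a = j (m b a) (m c a).
Proof. rewrite (meetC HL), (meetJr HL), (meetC HL a b), (meetC HL a c). reflexivity. Qed.

Lemma meet_mono a b c d : le m a b -> le m c d -> le m (m a c) (m b d).
Proof.
  intros. apply lexM.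
  - apply (le_trans _ _ _ (leMl a c)); assumption.
  - apply (le_trans _ _ _ (leMr a c)); assumption.
Qed.
End Lattice.

Ltac lattice_depth k :=
  match k with
  | O => fail
  | S ?k' =>
  match goal with
  | HL : DLattice ?M ?J ?Z ?O |- le ?M ?x ?y =>
    first
    [ apply (le_refl HL)
    | assumption
    | apply (le0x HL)
    | apply (lex1 HL)
    | apply (lexM HL); lattice_depth k
    | apply (leJx HL); lattice_depth k
    | eapply (le_trans HL); [apply (leMl HL) | lattice_depth k']
    | eapply (le_trans HL); [apply (leMr HL) | lattice_depth k']
    | eapply (le_trans HL); [ | apply (leJl HL)]; lattice_depth k'
    | eapply (le_trans HL); [ | apply (leJr HL)]; lattice_depth k'
    | match goal with Hab : le M ?a y |- _ =>
        eapply (le_trans HL _ a y); [lattice_depth k' | exact Hab] end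
    | match goal with Hab : le M x ?a |- _ =>
        eapply (le_trans HL x a y); [exact Hab | lattice_depth k'] end ]
  end end.
Ltac lattice := lattice_depth 5.

Section Boolean.
Context {L : Type} {m j : L -> L -> L} {z o : L} {n : L -> L} (HL : DLattice m j z o)
  (meet_compl : forall a, m a (n a) = z) (join_compl : forall a, j a (n a) = o).

Lemma shunt a x b : le m (m a x) b <-> le m a (j (n x) b).
Proof.
  split; intro E.
  - assert (Ea : a = j (m a x) (m a (n x)))
      by (rewrite <- (meetJr HL), join_compl, (meet1 HL); reflexivity).
    rewrite Ea. apply (leJx HL).
    + eapply (le_trans HL); [exact E | apply (leJr HL)].
    + lattice.
  - eapply (le_trans HL); [apply (meet_mono HL); [exact E | apply (le_refl HL)] |].
    rewrite (meetJl HL), (meetC HL (n x) x), meet_compl. apply (leJx HL); lattice.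
Qed.

Lemma modus_ponens x y : le m (m (j (n x) y) x) y.
Proof. apply shunt. apply (le_refl HL). Qed.

Lemma compl_unique a x : m a x = z -> j a x = o -> x = n a.
Proof.
  intros E1 E2. transitivity (m x (n a)).
  - rewrite <- (meet1 HL x) at 1.
    rewrite <- (join_compl a), (meetJr HL), (meetC HL x a), E1, (joinC HL), (join0 HL).
    reflexivity.
  - transitivity (m (n a) (j a x)).
    + rewrite (meetJr HL), (meetC HL (n a) a), meet_compl, (joinC HL z), (join0 HL).
      apply (meetC HL).
    + rewrite E2. apply (meet1 HL).
Qed.

Lemma complK a : n (n a) = a.
Proof.
  symmetry. apply compl_unique; [rewrite (meetC HL) | rewrite (joinC HL)]; auto.
Qed.

Lemma compl_inj a b : n a = n b -> a = b.
Proof. intro E. rewrite <- (complK a), E, complK. reflexivity. Qed.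

Lemma complM a b : n (m a b) = j (n a) (n b).
Proof.
  symmetry. apply compl_unique.
  - apply (le0_eq HL). rewrite (meetJr HL). apply (leJx HL).
    + rewrite <- (meet_compl a). lattice.
    + rewrite <- (meet_compl b). lattice.
  - apply (le1_eq HL). rewrite (joinC HL), (joinMr HL). apply (lexM HL).
    + rewrite <- (join_compl a), (joinC HL a). lattice.
    + rewrite <- (join_compl b), (joinC HL b). lattice.
Qed.

Lemma compl0 : n z = o.
Proof. symmetry. apply compl_unique; [apply (meet1 HL) | apply (join1 HL)]. Qed.

Lemma compl1 : n o = z.
Proof. apply compl_inj. rewrite compl0, complK. reflexivity. Qed.

Lemma compl_anti a b : le m a b -> le m (n b) (n a).
Proof.
  intro E. apply (le_joinE HL). rewrite <- complM, (meetC HL). unfold le in E.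
  rewrite E. reflexivity.
Qed.

Lemma shunt_compl a x b : le m (m a (n x)) b <-> le m a (j x b).
Proof. rewrite shunt, complK. tauto. Qed.

Lemma le_meet_clause p x y c q :
  le m (m p (m (j x (n y)) c)) q <-> le m (m (m p x) c) q /\ le m (m p c) (j q y).
Proof.
  rewrite (meetC HL (j x (n y)) c), (meetA HL), (meetJr HL), (joinC HL q y), <- shunt_compl.
  split.
  - intro E. split; eapply (le_trans HL); try exact E.
    + apply (le_trans HL _ (m (m p c) x)); [lattice | apply (leJl HL)].
    + apply (leJr HL).
  - intros [E1 E2]. apply (leJx HL); [| exact E2].
    eapply (le_trans HL); [| exact E1]. lattice.
Qed.

Definition biimp x y := m (j (n x) y) (j (n y) x).

Lemma biimpxx x : biimp x x = o.
Proof. unfold biimp. rewrite (joinC HL (n x)), join_compl. apply (meet1 HL). Qed.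

Lemma biimpC x y : biimp x y = biimp y x.
Proof. apply (meetC HL). Qed.

Lemma biimp_compl a b : biimp (n a) (n b) = biimp a b.
Proof.
  unfold biimp. rewrite !complK, (meetC HL), (joinC HL a), (joinC HL b). reflexivity.
Qed.

Lemma biimpx1 y : biimp y o = y.
Proof.
  unfold biimp. rewrite compl1, (join1 HL), (joinC HL z), (join0 HL), (meetC HL), (meet1 HL).
  reflexivity.
Qed.

Lemma meet_biimp_lel x y : le m (m x (biimp x y)) y.
Proof.
  eapply (le_trans HL); [| apply (modus_ponens x y)].
  rewrite (meetC HL x). apply (meet_mono HL); [apply (leMl HL) | apply (le_refl HL)].
Qed.

Lemma meet_biimp_ler x y : le m (m y (biimp x y)) x.
Proof. rewrite biimpC. apply meet_biimp_lel. Qed.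

Lemma le_biimp u c d : le m u (biimp c d) <-> le m (m c u) d /\ le m (m d u) c.
Proof.
  unfold biimp. rewrite (meetC HL c u), (meetC HL d u), !shunt. split.
  - intro E. split; eapply (le_trans HL); try exact E; lattice.
  - intros [E1 E2]. lattice.
Qed.

Lemma meet_biimp c d : m c (biimp c d) = m c d.
Proof.
  apply (le_antisym HL).
  - apply (lexM HL); [apply (leMl HL) | apply meet_biimp_lel].
  - apply (lexM HL); [apply (leMl HL) |]. unfold biimp. lattice.
Qed.

Lemma biimp_trans x y w : le m (m (biimp x y) (biimp y w)) (biimp x w).
Proof.
  apply le_biimp. split.
  - apply (le_trans HL _ (m y (biimp y w))); [| apply meet_biimp_lel].
    apply (lexM HL); [| lattice].
    apply (le_trans HL _ (m x (biimp x y))); [lattice | apply meet_biimp_lel].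
  - apply (le_trans HL _ (m y (biimp x y))); [| apply meet_biimp_ler].
    apply (lexM HL); [| lattice].
    apply (le_trans HL _ (m w (biimp y w))); [lattice | apply meet_biimp_ler].
Qed.

Lemma biimpM a b c d : le m (m (biimp a b) (biimp c d)) (biimp (m a c) (m b d)).
Proof.
  pose proof (meet_biimp_lel a b); pose proof (meet_biimp_ler a b).
  pose proof (meet_biimp_lel c d); pose proof (meet_biimp_ler c d).
  apply le_biimp. split; apply (lexM HL).
  - apply (le_trans HL _ (m a (biimp a b))); lattice.
  - apply (le_trans HL _ (m c (biimp c d))); lattice.
  - apply (le_trans HL _ (m b (biimp a b))); lattice.
  - apply (le_trans HL _ (m d (biimp c d))); lattice.
Qed.

Lemma biimpJ a b c d : le m (m (biimp a b) (biimp c d)) (biimp (j a c) (j b d)).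
Proof.
  pose proof (meet_biimp_lel a b); pose proof (meet_biimp_ler a b).
  pose proof (meet_biimp_lel c d); pose proof (meet_biimp_ler c d).
  apply le_biimp. split; rewrite (meetJl HL); apply (leJx HL).
  - apply (le_trans HL _ (m a (biimp a b))); lattice.
  - apply (le_trans HL _ (m c (biimp c d))); lattice.
  - apply (le_trans HL _ (m b (biimp a b))); lattice.
  - apply (le_trans HL _ (m d (biimp c d))); lattice.
Qed.
End Boolean.

(** * Tense algebras and their principal congruences *)

Lemma boolean_lattice (B : TStr) : isBoolean B -> DLattice (tmeet B) (tjoin B) (tzero B) (tone B).
Proof. intros (h1&h2&h3&h4&h5&h6&h7&h8&h9&_). constructor; assumption. Qed.

Lemma boolean_meet_compl (B : TStr) : isBoolean B -> forall a, tmeet B a (tneg B a) = tzero B.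
Proof. intros HB. apply HB. Qed.

Lemma boolean_join_compl (B : TStr) : isBoolean B -> forall a, tjoin B a (tneg B a) = tone B.
Proof. intros HB. apply HB. Qed.

Definition tbiimp (B : TStr) : B -> B -> B := @biimp _ (tmeet B) (tjoin B) (tneg B).

Definition box (B : TStr) (x : B) : B := tmeet B x (tmeet B (tG B x) (tH B x)).

Fixpoint boxn (B : TStr) (k : nat) (x : B) : B :=
  match k with O => x | S k => box B (boxn B k x) end.

Section Tense.
Context (B : TStr) (HT : isTense B).
Let HB := proj1 HT.
Let HL := boolean_lattice B HB.
Let Hmc := boolean_meet_compl B HB.
Let Hjc := boolean_join_compl B HB.
Local Notation m := (tmeet B).
Local Notation G := (tG B).
Local Notation H := (tH B).
Local Notation o := (tone B).
Local Notation le := (le m).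
Local Notation bi := (tbiimp B).

Lemma P_adj_G x y : le (tP B x) y <-> le x (G y).
Proof. apply (proj1 (proj2 HT)). Qed.

Lemma F_adj_H x y : le (tF B x) y <-> le x (H y).
Proof. apply (proj2 (proj2 HT)). Qed.

Lemma G_mono x y : le x y -> le (G x) (G y).
Proof.
  intro E. apply P_adj_G. eapply (le_trans HL); [| exact E].
  apply P_adj_G, (le_refl HL).
Qed.

Lemma H_mono x y : le x y -> le (H x) (H y).
Proof.
  intro E. apply F_adj_H. eapply (le_trans HL); [| exact E].
  apply F_adj_H, (le_refl HL).
Qed.

Lemma P_mono x y : le x y -> le (tP B x) (tP B y).
Proof. intro E. apply (compl_anti HL Hmc Hjc), H_mono, (compl_anti HL Hmc Hjc), E. Qed.

Lemma F_mono x y : le x y -> le (tF B x) (tF B y).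
Proof. intro E. apply (compl_anti HL Hmc Hjc), G_mono, (compl_anti HL Hmc Hjc), E. Qed.

Lemma GM x y : G (m x y) = m (G x) (G y).
Proof.
  apply (le_antisym HL).
  - apply (lexM HL); apply G_mono; lattice.
  - apply P_adj_G. apply (lexM HL).
    + eapply (le_trans HL); [apply P_mono, (leMl HL) | apply P_adj_G, (le_refl HL)].
    + eapply (le_trans HL); [apply P_mono, (leMr HL) | apply P_adj_G, (le_refl HL)].
Qed.

Lemma HM x y : H (m x y) = m (H x) (H y).
Proof.
  apply (le_antisym HL).
  - apply (lexM HL); apply H_mono; lattice.
  - apply F_adj_H. apply (lexM HL).
    + eapply (le_trans HL); [apply F_mono, (leMl HL) | apply F_adj_H, (le_refl HL)].
    + eapply (le_trans HL); [apply F_mono, (leMr HL) | apply F_adj_H, (le_refl HL)].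
Qed.

Lemma G1 : G o = o.
Proof. apply (le1_eq HL), P_adj_G, (lex1 HL). Qed.

Lemma H1 : H o = o.
Proof. apply (le1_eq HL), F_adj_H, (lex1 HL). Qed.

Lemma biimp_G x y : le (G (bi x y)) (bi (G x) (G y)).
Proof.
  apply (le_biimp HL Hmc Hjc). split; rewrite <- GM; apply G_mono;
    [apply (meet_biimp_lel HL Hmc Hjc) | apply (meet_biimp_ler HL Hmc Hjc)].
Qed.

Lemma biimp_H x y : le (H (bi x y)) (bi (H x) (H y)).
Proof.
  apply (le_biimp HL Hmc Hjc). split; rewrite <- HM; apply H_mono;
    [apply (meet_biimp_lel HL Hmc Hjc) | apply (meet_biimp_ler HL Hmc Hjc)].
Qed.

Lemma box_le x : le (box B x) x.
Proof. apply (leMl HL). Qed.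

Lemma boxn_anti k k' x : k <= k' -> le (boxn B k' x) (boxn B k x).
Proof.
  induction 1; [apply (le_refl HL) |].
  eapply (le_trans HL); [apply box_le | assumption].
Qed.

Lemma boxn_add k l x : boxn B (k + l) x = boxn B k (boxn B l x).
Proof. induction k; simpl; congruence. Qed.

Lemma boxn_stable k :
  (forall x, le (boxn B k x) (boxn B (S k) x)) -> forall l x, le (boxn B k x) (boxn B l x).
Proof.
  intros Hk l x. destruct (le_lt_dec l k) as [Hl | Hl]; [apply boxn_anti, Hl |].
  replace l with (k + (l - k)) by lia.
  induction (l - k) as [| d IH]; [rewrite Nat.add_0_r; apply (le_refl HL) |].
  eapply (le_trans HL); [exact IH |].
  rewrite boxn_add, <- Nat.add_succ_comm, boxn_add. apply Hk.
Qed.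

Lemma tbiimpx1 y : bi y o = y.
Proof. apply (biimpx1 HL Hmc Hjc). Qed.

Definition Cg_box (u x y : B) : Prop := exists k, le (boxn B k u) (bi x y).

Lemma Cg_box_meet u x y x' y' :
  Cg_box u x y -> Cg_box u x' y' -> exists k, le (boxn B k u) (m (bi x y) (bi x' y')).
Proof.
  intros [k1 E1] [k2 E2]. exists (max k1 k2). apply (lexM HL).
  - apply (le_trans HL _ (boxn B k1 u)); [apply boxn_anti; lia | exact E1].
  - apply (le_trans HL _ (boxn B k2 u)); [apply boxn_anti; lia | exact E2].
Qed.

Lemma Cg_box_cong u : congT B (Cg_box u).
Proof.
  assert (Bin : forall f : B -> B -> B,
    (forall a b c d, le (m (bi a b) (bi c d)) (bi (f a c) (f b d))) ->
    forall a b c d, Cg_box u a b -> Cg_box u c d -> Cg_box u (f a c) (f b d)).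
  { intros f Hf a b c d Eab Ecd. destruct (Cg_box_meet _ _ _ _ _ Eab Ecd) as [k E].
    exists k. eapply (le_trans HL); [exact E | apply Hf]. }
  split; [split; [| split] | split; [| split; [| split; [| split]]]].
  - intro x. exists 0. unfold tbiimp. rewrite (biimpxx HL Hjc). apply (lex1 HL).
  - intros x y [k E]. exists k. unfold tbiimp in *. rewrite (biimpC HL). exact E.
  - intros x y w Exy Eyw. destruct (Cg_box_meet _ _ _ _ _ Exy Eyw) as [k E].
    exists k. eapply (le_trans HL); [exact E | apply (biimp_trans HL Hmc Hjc)].
  - apply Bin, (biimpM HL Hmc Hjc).
  - apply Bin, (biimpJ HL Hmc Hjc).
  - intros a b [k E]. exists k. unfold tbiimp in *. rewrite (biimp_compl HL Hmc Hjc). exact E.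
  - intros a b [k E]. exists (S k).
    apply (le_trans HL _ (G (boxn B k u))); [unfold boxn, box; lattice |].
    eapply (le_trans HL); [apply G_mono, E | apply biimp_G].
  - intros a b [k E]. exists (S k).
    apply (le_trans HL _ (H (boxn B k u))); [unfold boxn, box; lattice |].
    eapply (le_trans HL); [apply H_mono, E | apply biimp_H].
Qed.

Section Congruence.
Variable r : B -> B -> Prop.
Hypothesis Hr : congT B r.
Let r_refl := proj1 (proj1 Hr).
Let r_sym := proj1 (proj2 (proj1 Hr)).
Let r_trans := proj2 (proj2 (proj1 Hr)).
Let r_meet := proj1 (proj2 Hr).
Let r_join := proj1 (proj2 (proj2 Hr)).
Let r_neg := proj1 (proj2 (proj2 (proj2 Hr))).
Let r_G := proj1 (proj2 (proj2 (proj2 (proj2 Hr)))).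
Let r_H := proj2 (proj2 (proj2 (proj2 (proj2 Hr)))).

Lemma cong_biimp1 x y : r x y -> r (bi x y) o.
Proof.
  intro Rxy. rewrite <- (biimpxx HL Hjc y). unfold tbiimp, biimp.
  apply r_meet; apply r_join; try apply r_neg; auto.
Qed.

Lemma cong_boxn1 k x : r x o -> r (boxn B k x) o.
Proof.
  intro Rx. induction k as [| k IH]; [exact Rx |]. simpl. unfold box.
  assert (E1 : o = m o (m (G o) (H o))) by (rewrite G1, H1, !(meet1 HL); auto).
  rewrite E1.
  apply r_meet; [| apply r_meet; [apply r_G | apply r_H]]; exact IH.
Qed.

Lemma cong_up1 x y : le x y -> r x o -> r y o.
Proof.
  intros Exy Rx. apply (le_joinE HL) in Exy. rewrite <- Exy, <- (join1 HL y), (joinC HL y).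
  apply r_join; auto.
Qed.

Lemma cong_of_biimp1 c d : r (bi c d) o -> r c d.
Proof.
  assert (Half : forall x y, r (bi x y) o -> r x (m x y)).
  { intros x y Rxy. rewrite <- (meet_biimp HL Hmc Hjc x y).
    rewrite <- (meet1 HL x) at 1. apply r_meet; [apply r_refl | apply r_sym, Rxy]. }
  intro Rcd. apply (r_trans _ (m c d)); [apply Half, Rcd |].
  rewrite (meetC HL). apply r_sym, Half. unfold tbiimp. rewrite (biimpC HL). exact Rcd.
Qed.
End Congruence.

Lemma CgT_box a b c d : CgT B a b c d <-> Cg_box (bi a b) c d.
Proof.
  split.
  - intro Cg. apply Cg; [apply Cg_box_cong |]. exists 0. apply (le_refl HL).
  - intros [k E] r Hr Rab. apply (cong_of_biimp1 r Hr).
    apply (cong_up1 r Hr _ _ E), (cong_boxn1 r Hr), (cong_biimp1 r Hr), Rab.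
Qed.
End Tense.

(** * A uniform bound from EDPC *)

Definition prodT (Bs : nat -> TStr) : TStr :=
  {| tc := forall i, Bs i;
     tmeet := fun x y i => tmeet (Bs i) (x i) (y i);
     tjoin := fun x y i => tjoin (Bs i) (x i) (y i);
     tneg := fun x i => tneg (Bs i) (x i);
     tzero := fun i => tzero (Bs i);
     tone := fun i => tone (Bs i);
     tG := fun x i => tG (Bs i) (x i);
     tH := fun x i => tH (Bs i) (x i) |}.

Section Products.
Variable Bs : nat -> TStr.

Lemma teval_prod (v : nat -> prodT Bs) t :
  teval (prodT Bs) v t = fun i => teval (Bs i) (fun k => v k i) t.
Proof. induction t; simpl; try rewrite IHt1, IHt2; try rewrite IHt; reflexivity. Qed.

Lemma le_prod (x y : prodT Bs) :
  le (tmeet (prodT Bs)) x y <-> forall i, le (tmeet (Bs i)) (x i) (y i).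
Proof.
  unfold le; simpl. split.
  - intros E i. exact (equal_f_dep E i).
  - intro E. apply functional_extensionality_dep, E.
Qed.

Lemma prod_isTense : (forall i, isTense (Bs i)) -> isTense (prodT Bs).
Proof.
  intro HT. split; [| split].
  - repeat split; intros; apply functional_extensionality_dep; intro i;
      destruct (proj1 (HT i)) as (h1&h2&h3&h4&h5&h6&h7&h8&h9&h10&h11); simpl; auto.
  - intros x y. split; intro E; apply le_prod; intro i;
      apply (proj1 (proj2 (HT i))), (proj1 (le_prod _ _) E i).
  - intros x y. split; intro E; apply le_prod; intro i;
      apply (proj2 (proj2 (HT i))), (proj1 (le_prod _ _) E i).
Qed.

Lemma boxn_prod k (x : prodT Bs) : boxn (prodT Bs) k x = fun i => boxn (Bs i) k (x i).
Proof. induction k; simpl; [| rewrite IHk]; reflexivity. Qed.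

Lemma val4_prod (a b c d : prodT Bs) i :
  (fun k => val4 a b c d k i) = val4 (a i) (b i) (c i) (d i).
Proof. apply functional_extensionality. intros [| [| [| k]]]; reflexivity. Qed.
End Products.

Lemma varietyT_isTense N : varietyT N -> forall B, N B -> isTense B.
Proof. intros [E HE] B NB. apply HE, NB. Qed.

Lemma varietyT_prod N : varietyT N -> forall Bs, (forall i, N (Bs i)) -> N (prodT Bs).
Proof.
  intros [E HE] Bs HN. apply HE. split.
  - apply prod_isTense. intro i. apply HE, HN.
  - intros e He v. rewrite !teval_prod. apply functional_extensionality_dep. intro i.
    apply (proj2 (proj1 (HE (Bs i)) (HN i)) e He).
Qed.

Lemma EDPC_T_prod N : varietyT N -> EDPC_T N ->
  forall Bs, (forall i, N (Bs i)) -> forall a b c d : prodT Bs,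
  (forall i, CgT (Bs i) (a i) (b i) (c i) (d i)) -> CgT (prodT Bs) a b c d.
Proof.
  intros HN [zeta Hzeta] Bs NBs a b c d Cgi.
  apply (Hzeta _ (varietyT_prod N HN Bs NBs)). apply Forall_forall. intros e He.
  rewrite !teval_prod. apply functional_extensionality_dep. intro i. rewrite val4_prod.
  apply (Hzeta _ (NBs i)) in Cgi. exact (proj1 (Forall_forall _ _) Cgi e He).
Qed.

(* Otherwise pick [B_k] in [N] and [x_k] in [B_k] with [~ box^k x_k <= box^(k+1) x_k].
   In each factor [(box^(k+1) x_k, 1)] lies in [Cg(x_k, 1)], so by EDPC the same holds in
   the product; this yields one [k] with [box^k x_i <= box^(i+1) x_i] for all [i], which
   fails at [i = k]. *)
Lemma EDPC_T_boxn_bound N : varietyT N -> EDPC_T N ->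
  exists k, forall B, N B -> forall x : B, le (tmeet B) (boxn B k x) (boxn B (S k) x).
Proof.
  intros HN HE. apply NNPP. intro Hno.
  assert (Hwit : forall k, exists p : {B : TStr & tc B}, N (projT1 p) /\
    ~ le (tmeet _) (boxn _ k (projT2 p)) (boxn _ (S k) (projT2 p))).
  { intro k. apply NNPP. intro Hk. apply Hno. exists k. intros B NB x. apply NNPP. intro Hx.
    apply Hk. exists (existT _ B x). auto. }
  destruct (choice _ Hwit) as [f Hf].
  set (Bs := fun i => projT1 (f i)).
  set (x := (fun i => projT2 (f i)) : prodT Bs).
  assert (NBs : forall i, N (Bs i)) by (intro i; apply Hf).
  assert (HT : forall i, isTense (Bs i)) by (intro i; apply (varietyT_isTense N HN), NBs).
  assert (Cg : CgT (prodT Bs) x (tone _) (fun i => boxn (Bs i) (S i) (x i)) (tone _)).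
  { apply (EDPC_T_prod N HN HE Bs NBs). intro i. cbn beta.
    apply (CgT_box _ (HT i)). exists (S i). rewrite !(tbiimpx1 _ (HT i)).
    apply (le_refl (boolean_lattice _ (proj1 (HT i)))). }
  apply (CgT_box _ (prod_isTense _ HT)) in Cg. destruct Cg as [k E].
  rewrite !(tbiimpx1 _ (prod_isTense _ HT)), boxn_prod in E.
  apply (Hf k). exact (proj1 (le_prod _ _ _) E k).
Qed.

(** * Prime filters of WHB-algebras *)

Lemma whb_lattice (A : WStr) : isWHB A -> DLattice (wmeet A) (wjoin A) (wzero A) (wone A).
Proof. intros (h1&h2&h3&h4&h5&h6&h7&h8&h9&_). constructor; assumption. Qed.

Section WHB.
Context (A : WStr) (HW : isWHB A).
Let HL := whb_lattice A HW.
Local Notation m := (wmeet A).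
Local Notation j := (wjoin A).
Local Notation i := (wimp A).
Local Notation ci := (wcoimp A).
Local Notation o := (wone A).
Local Notation z := (wzero A).
Local Notation le := (le m).

Lemma impxx a : i a a = o. Proof. apply HW. Qed.
Lemma impM a b c : i a (m b c) = m (i a b) (i a c). Proof. apply HW. Qed.
Lemma impJ a b c : i (j a b) c = m (i a c) (i b c). Proof. apply HW. Qed.
Lemma imp_trans a b c : le (m (i a b) (i b c)) (i a c). Proof. apply HW. Qed.
Lemma coimpxx a : ci a a = z. Proof. apply HW. Qed.
Lemma coimpJ a b c : ci (j a b) c = j (ci a c) (ci b c). Proof. apply HW. Qed.
Lemma coimpM a b c : ci a (m b c) = j (ci a b) (ci a c). Proof. apply HW. Qed.
Lemma coimp_trans a b c : le (ci a c) (j (ci a b) (ci b c)). Proof. apply HW. Qed.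

Lemma imp_mono x y y' : le y y' -> le (i x y) (i x y').
Proof. unfold le. intro E. rewrite <- impM, E. reflexivity. Qed.

Lemma imp_anti x x' y : le x' x -> le (i x y) (i x' y).
Proof.
  intro E. apply (le_joinE HL) in E. unfold le.
  rewrite <- E at 2. rewrite impJ. apply (meetC HL).
Qed.

Lemma coimp_mono a a' b : le a a' -> le (ci a b) (ci a' b).
Proof.
  intro E. apply (le_joinE HL) in E. apply (le_joinE HL). rewrite <- coimpJ, E. reflexivity.
Qed.

Lemma coimp_anti x y y' : le y y' -> le (ci x y') (ci x y).
Proof.
  intro E. apply (le_joinE HL). unfold le in E.
  rewrite <- E at 2. rewrite coimpM. apply (joinC HL).
Qed.

Lemma imp_le1 x y : le x y -> i x y = o.
Proof.
  intro E. apply (le_joinE HL) in E.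
  pose proof (impJ x y y) as Q. rewrite E, impxx, (meet1 HL) in Q. symmetry. exact Q.
Qed.

Lemma coimp_le0 x y : le x y -> ci x y = z.
Proof.
  intro E. apply (le_joinE HL) in E.
  pose proof (coimpJ x y y) as Q. rewrite E, coimpxx, (join0 HL) in Q. symmetry. exact Q.
Qed.

Section PrimeFilter.
Variables (P : A -> Prop) (HP : primeFilter A P).
Lemma pf_one : P o. Proof. apply HP. Qed.
Lemma pf_up a b : P a -> le a b -> P b. Proof. apply HP. Qed.
Lemma pf_meet a b : P a -> P b -> P (m a b). Proof. apply HP. Qed.
Lemma pf_zero : ~ P z. Proof. apply HP. Qed.
Lemma pf_prime a b : P (j a b) -> P a \/ P b. Proof. apply HP. Qed.
End PrimeFilter.

(* A prime filter theorem relative to [bad]: [bad := le] gives the usual one, and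
   [fun x y => P (x -> y)], [fun x y => ~ P (x <- y)] give [R_A]- and [S_A]-successors
   of a prime filter [P]. *)
Section Separation.
Variable bad : A -> A -> Prop.
Hypothesis bad_mono : forall x y x' y', bad x y -> le x' x -> le y y' -> bad x' y'.
Hypothesis bad_refl : forall x, bad x x.
Hypothesis bad_cut : forall x y w, bad (m x w) y -> bad x (j y w) -> bad x y.
Variables (a b : A).

Record sep_pair (F I : A -> Prop) : Prop := {
  sep_a : F a;
  sep_b : I b;
  sep_up : forall x y, F x -> le x y -> F y;
  sep_meet : forall x y, F x -> F y -> F (m x y);
  sep_down : forall x y, I y -> le x y -> I x;
  sep_join : forall x y, I x -> I y -> I (j x y);
  sep_good : forall x y, F x -> I y -> ~ bad x y }.
Arguments sep_a {F I}. Arguments sep_b {F I}. Arguments sep_up {F I}.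
Arguments sep_meet {F I}. Arguments sep_down {F I}. Arguments sep_join {F I}.
Arguments sep_good {F I}.

Definition pair_set (F I : A -> Prop) (t : A + A) : Prop :=
  match t with inl x => F x | inr y => I y end.

(* Zorn's lemma also needs the union of the empty chain. *)
Let sep_or_empty (S : A + A -> Prop) : Prop :=
  (forall t, ~ S t) \/ sep_pair (fun x => S (inl x)) (fun y => S (inr y)).

Lemma sep_or_empty_chain (Fam : (A + A -> Prop) -> Prop) :
  (forall S, Fam S -> sep_or_empty S) ->
  (forall S S', Fam S -> Fam S' -> (forall t, S t -> S' t) \/ (forall t, S' t -> S t)) ->
  sep_or_empty (fun t => exists2 S, Fam S & S t).
Proof.
  intros HFam Htot.
  destruct (classic (exists S t, Fam S /\ S t)) as [[S0 [t0 [FS0 S0t]]] | Hempty].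
  2: { left. intros t [S FS St]. apply Hempty. exists S, t. auto. }
  right.
  assert (Hsep : forall S t, Fam S -> S t -> sep_pair (fun x => S (inl x)) (fun y => S (inr y))).
  { intros S t FS St. destruct (HFam S FS) as [E | E]; [destruct (E t St) | exact E]. }
  assert (Two : forall S S' t t', Fam S -> Fam S' -> S t -> S' t' ->
                exists2 W, Fam W & W t /\ W t').
  { intros S S' t t' FS FS' St St'. destruct (Htot S S' FS FS') as [Inc | Inc].
    - exists S'; auto.
    - exists S; auto. }
  split.
  - exists S0; [exact FS0 | apply (sep_a (Hsep S0 t0 FS0 S0t))].
  - exists S0; [exact FS0 | apply (sep_b (Hsep S0 t0 FS0 S0t))].
  - intros x y [S FS Sx] E. exists S; [exact FS | apply (sep_up (Hsep S _ FS Sx)) with x; auto].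
  - intros x y [S FS Sx] [S' FS' Sy]. destruct (Two S S' _ _ FS FS' Sx Sy) as [W FW [Wx Wy]].
    exists W; [exact FW | apply (sep_meet (Hsep W _ FW Wx)); auto].
  - intros x y [S FS Sy] E. exists S; [exact FS | apply (sep_down (Hsep S _ FS Sy)) with y; auto].
  - intros x y [S FS Sx] [S' FS' Sy]. destruct (Two S S' _ _ FS FS' Sx Sy) as [W FW [Wx Wy]].
    exists W; [exact FW | apply (sep_join (Hsep W _ FW Wx)); auto].
  - intros x y [S FS Sx] [S' FS' Sy]. destruct (Two S S' _ _ FS FS' Sx Sy) as [W FW [Wx Wy]].
    apply (sep_good (Hsep W _ FW Wx)); auto.
Qed.

Definition maximal_sep_pair (F I : A -> Prop) : Prop :=
  sep_pair F I /\
  forall F' I', sep_pair F' I' -> (forall x, F x -> F' x) -> (forall y, I y -> I' y) ->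
    (forall x, F' x -> F x) /\ (forall y, I' y -> I y).

Lemma maximal_sep_pair_exists : ~ bad a b -> exists F I, maximal_sep_pair F I.
Proof.
  intro hab.
  destruct (@classical_sets.Zorn_bigcup (A + A) sep_or_empty) as [S [PS HS]].
  { intros Fam HFam Htot. apply sep_or_empty_chain; assumption. }
  assert (Hmax : forall S', (forall t, S t -> S' t) -> sep_or_empty S' -> forall t, S' t -> S t).
  { intros S' Inc PS' t S't. apply NNPP. intro nSt.
    apply (HS S'); [split; [exact Inc | intro C; exact (nSt (C t S't))] | exact PS']. }
  destruct PS as [Empty | Hsep].
  - exfalso. apply (Empty (inl a)).
    apply (Hmax (pair_set (fun x => le a x) (fun y => le y b))).
    + intros t St. destruct (Empty t St).
    + right. split; simpl; intros.
      1-6: lattice.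
      intro Bxy. apply hab. eapply bad_mono; eassumption.
    + apply (le_refl HL).
  - exists (fun x => S (inl x)), (fun y => S (inr y)). split; [exact Hsep |].
    intros F' I' H' IncF IncI.
    assert (Inc : forall t, S t -> pair_set F' I' t) by (intros [x | y]; simpl; auto).
    split; [intros x Hx; exact (Hmax _ Inc (or_intror H') (inl x) Hx)
           | intros y Hy; exact (Hmax _ Inc (or_intror H') (inr y) Hy)].
Qed.

Lemma maximal_sep_pair_extend_left F I w : maximal_sep_pair F I -> ~ F w ->
  exists q y, F q /\ I y /\ bad (m q w) y.
Proof.
  intros [Hsep Hmax] nFw. apply NNPP. intro Hno. apply nFw.
  set (Fw := fun x => exists2 q, F q & le (m q w) x).
  assert (Hw : sep_pair Fw I).
  { split.
    - exists a; [apply (sep_a Hsep) | apply (leMl HL)].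
    - apply (sep_b Hsep).
    - intros x y [q Fq E] E'. exists q; [exact Fq | eapply (le_trans HL); eassumption].
    - intros x y [q Fq E] [q' Fq' E']. exists (m q q'); [apply (sep_meet Hsep); assumption |].
      lattice.
    - apply (sep_down Hsep).
    - apply (sep_join Hsep).
    - intros x y [q Fq E] Iy Bxy. apply Hno. exists q, y. split; [exact Fq | split; [exact Iy |]].
      eapply bad_mono; [exact Bxy | exact E | apply (le_refl HL)]. }
  assert (IncF : forall x, F x -> Fw x) by (intros x Fx; exists x; [exact Fx | apply (leMl HL)]).
  apply (proj1 (Hmax Fw I Hw IncF (fun y Iy => Iy))).
  exists a; [apply (sep_a Hsep) | apply (leMr HL)].
Qed.

Lemma maximal_sep_pair_extend_right F I w : maximal_sep_pair F I -> ~ I w ->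
  exists q y, F q /\ I y /\ bad q (j y w).
Proof.
  intros [Hsep Hmax] nIw. apply NNPP. intro Hno. apply nIw.
  set (Iw := fun y => exists2 u, I u & le y (j u w)).
  assert (Hw : sep_pair F Iw).
  { split.
    - apply (sep_a Hsep).
    - exists b; [apply (sep_b Hsep) | apply (leJl HL)].
    - apply (sep_up Hsep).
    - apply (sep_meet Hsep).
    - intros x y [u Iu E] E'. exists u; [exact Iu | eapply (le_trans HL); eassumption].
    - intros x y [u Iu E] [u' Iu' E']. exists (j u u'); [apply (sep_join Hsep); assumption |].
      lattice.
    - intros x y Fx [u Iu E] Bxy. apply Hno. exists x, u. split; [exact Fx | split; [exact Iu |]].
      eapply bad_mono; [exact Bxy | apply (le_refl HL) | exact E]. }
  assert (IncI : forall y, I y -> Iw y) by (intros y Iy; exists y; [exact Iy | apply (leJl HL)]).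
  apply (proj2 (Hmax F Iw Hw (fun x Fx => Fx) IncI)).
  exists b; [apply (sep_b Hsep) | apply (leJr HL)].
Qed.

(* Extending a maximal pair by [w] on either side fails; the two failures combine by
   [bad_cut] into a bad pair across [(F, I)]. *)
Lemma maximal_sep_pair_cover F I : maximal_sep_pair F I -> forall w, F w \/ I w.
Proof.
  intros HM w. apply NNPP. intro Hw.
  destruct (maximal_sep_pair_extend_left F I w HM) as [q [y [Fq [Iy B1]]]]; [tauto |].
  destruct (maximal_sep_pair_extend_right F I w HM) as [q' [y' [Fq' [Iy' B2]]]]; [tauto |].
  destruct HM as [Hsep _].
  apply (sep_good Hsep _ _ (sep_meet Hsep _ _ Fq Fq') (sep_join Hsep _ _ Iy Iy')), (bad_cut _ _ w).
  - eapply bad_mono; [exact B1 | lattice | lattice].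
  - eapply bad_mono; [exact B2 | lattice | lattice].
Qed.

Theorem separation : ~ bad a b ->
  exists Q, primeFilter A Q /\ Q a /\ ~ Q b /\ (forall x y, Q x -> ~ Q y -> ~ bad x y).
Proof.
  intro hab. destruct (maximal_sep_pair_exists hab) as [F [I HM]].
  pose proof (maximal_sep_pair_cover F I HM) as Cover. destruct HM as [Hs _].
  assert (Disj : forall w, F w -> I w -> False)
    by (intros w Fw Iw; exact (sep_good Hs _ _ Fw Iw (bad_refl w))).
  exists F. split; [| split; [apply (sep_a Hs) | split]].
  - split; [| split; [| split; [| split]]].
    + apply (sep_up Hs a); [apply (sep_a Hs) | apply (lex1 HL)].
    + apply (sep_up Hs).
    + apply (sep_meet Hs).
    + intro Fz. apply (Disj z Fz), (sep_down Hs z b); [apply (sep_b Hs) | apply (le0x HL)].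
    + intros x y Fxy. apply NNPP. intro nxy. apply (Disj _ Fxy), (sep_join Hs).
      * destruct (Cover x); tauto.
      * destruct (Cover y); tauto.
  - intro Fb. exact (Disj b Fb (sep_b Hs)).
  - intros x y Fx nFy. apply (sep_good Hs _ _ Fx). destruct (Cover y); tauto.
Qed.
End Separation.
End WHB.

(** * The embedding of A into M(T(A)) *)

Section Representation.
Context (A : WStr) (HW : isWHB A).
Let HL := whb_lattice A HW.
Local Notation m := (wmeet A).
Local Notation j := (wjoin A).
Local Notation i := (wimp A).
Local Notation ci := (wcoimp A).
Local Notation o := (wone A).
Local Notation z := (wzero A).
Local Notation le := (le m).

Lemma separate_le a b : ~ le a b -> exists P, primeFilter A P /\ P a /\ ~ P b.
Proof.
  intro nab. destruct (separation A HW le) with (a := a) (b := b)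
    as [Q [HQ [Qa [nQb _]]]]; [intros; lattice | apply (le_refl HL) | | exact nab |].
  - intros x y w E1 E2. apply (le_trans HL _ (m x (j y w))); [lattice |].
    rewrite (meetJr HL). apply (leJx HL); [apply (leMr HL) | exact E1].
  - exists Q; auto.
Qed.

Lemma separate_R (P : A -> Prop) (HP : primeFilter A P) a b : ~ P (i a b) ->
  exists Q, primeFilter A Q /\ Q a /\ ~ Q b /\ (forall x y, P (i x y) -> Q x -> Q y).
Proof.
  intro nab. destruct (separation A HW (fun x y => P (i x y))) with (a := a) (b := b)
    as [Q [HQ [Qa [nQb HQ2]]]]; [| | | exact nab |].
  - intros x y x' y' E1 E2 E3. apply (pf_up A P HP (i x y)); [exact E1 |].
    eapply (le_trans HL); [apply (imp_anti A HW), E2 | apply (imp_mono A HW), E3].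
  - intro x. rewrite (impxx A HW). apply (pf_one A P HP).
  - intros x y w E1 E2.
    set (u := m (j y w) x).
    assert (Pxu : P (i x u)) by (unfold u; rewrite (impM A HW), (impxx A HW), (meet1 HL); exact E2).
    assert (Puy : P (i u y)).
    { unfold u. rewrite (meetJl HL), (impJ A HW), (imp_le1 A HW _ _ (leMl HL y x)).
      rewrite (meetC HL), (meet1 HL), (meetC HL w x). exact E1. }
    apply (pf_up A P HP _ _ (pf_meet A P HP _ _ Pxu Puy)), (imp_trans A HW).
  - exists Q. split; [exact HQ | split; [exact Qa | split; [exact nQb |]]].
    intros x y Pxy Qx. apply NNPP. intro nQy. exact (HQ2 x y Qx nQy Pxy).
Qed.

Lemma separate_S (P : A -> Prop) (HP : primeFilter A P) a b : P (ci a b) ->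
  exists Q, primeFilter A Q /\ Q a /\ ~ Q b /\ (forall x y, Q x -> ~ Q y -> P (ci x y)).
Proof.
  intro Pab. destruct (separation A HW (fun x y => ~ P (ci x y))) with (a := a) (b := b)
    as [Q [HQ [Qa [nQb HQ2]]]]; [| | | tauto |].
  - intros x y x' y' E1 E2 E3 E4. apply E1, (pf_up A P HP _ _ E4).
    eapply (le_trans HL); [apply (coimp_mono A HW), E2 | apply (coimp_anti A HW), E3].
  - intro x. rewrite (coimpxx A HW). apply (pf_zero A P HP).
  - intros x y w E1 E2 E3.
    set (u := m x (j y w)).
    assert (Exu : ci x u = ci x (j y w))
      by (unfold u; rewrite (coimpM A HW), (coimpxx A HW), (joinC HL), (join0 HL); reflexivity).
    assert (Euy : ci u y = ci (m x w) y).
    { unfold u. rewrite (meetJr HL), (coimpJ A HW), (coimp_le0 A HW _ _ (leMr HL x y)).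
      rewrite (joinC HL), (join0 HL). reflexivity. }
    pose proof (pf_up A P HP _ _ E3 (coimp_trans A HW x u y)) as Pxuy.
    rewrite Exu, Euy in Pxuy. destruct (pf_prime A P HP _ _ Pxuy); tauto.
  - exists Q. split; [exact HQ | split; [exact Qa | split; [exact nQb |]]].
    intros x y Qx nQy. apply NNPP. exact (HQ2 x y Qx nQy).
Qed.

Lemma clopen_sigma a : @clopen A (sigma a).
Proof.
  split.
  - intros P HP. exists [(a, true)]. split.
    + intros s [<- | []]. exact HP.
    + intros Q HQ. apply (HQ (a, true)). left; reflexivity.
  - intros P HP. exists [(a, false)]. split.
    + intros s [<- | []]. exact HP.
    + intros Q HQ. apply (HQ (a, false)). left; reflexivity.
Qed.

Variable h : closedT (PT A) (@clopen A).

Definition sigmaT (a : A) : subT h := exist _ (sigma a) (clopen_sigma a).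

Lemma sigmaT_ext a (U : subT h) : (forall P, sigma a P <-> proj1_sig U P) -> sigmaT a = U.
Proof.
  destruct U as [U HU]. intro E. unfold sigmaT.
  assert (EU : sigma a = U)
    by (apply functional_extensionality; intro P; apply propositional_extensionality, E).
  subst U. f_equal. apply proof_irrelevance.
Qed.

Lemma sigmaT_meet a b : sigmaT (m a b) = tmeet (subT h) (sigmaT a) (sigmaT b).
Proof.
  apply sigmaT_ext. intros [P HP]. unfold sigma; simpl. split.
  - intro E. split; apply (pf_up A P HP _ _ E); lattice.
  - intros [E1 E2]. apply (pf_meet A P HP); assumption.
Qed.

Lemma sigmaT_join a b : sigmaT (j a b) = tjoin (subT h) (sigmaT a) (sigmaT b).
Proof.
  apply sigmaT_ext. intros [P HP]. unfold sigma; simpl. split.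
  - apply (pf_prime A P HP).
  - intros [E | E]; apply (pf_up A P HP _ _ E); lattice.
Qed.

Lemma sigmaT_zero : sigmaT z = tzero (subT h).
Proof.
  apply sigmaT_ext. intros [P HP]. unfold sigma; simpl. split; [apply (pf_zero A P HP) | tauto].
Qed.

Lemma sigmaT_one : sigmaT o = tone (subT h).
Proof.
  apply sigmaT_ext. intros [P HP]. unfold sigma; simpl.
  split; [tauto | intros _; apply (pf_one A P HP)].
Qed.

Lemma sigmaT_imp a b : sigmaT (i a b) = wimp (M (subT h)) (sigmaT a) (sigmaT b).
Proof.
  apply sigmaT_ext. intros [P HP]. unfold sigma; simpl. split.
  - intros E [Q HQ] RPQ. simpl. destruct (classic (Q a)) as [Qa | nQa]; [right | left]; auto.
    exact (RPQ a b E Qa).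
  - intro E. apply NNPP. intro nE. destruct (separate_R P HP a b nE) as [Q [HQ [Qa [nQb HR]]]].
    destruct (E (exist _ Q HQ)) as [E1 | E1]; [exact HR | exact (E1 Qa) | exact (nQb E1)].
Qed.

Lemma sigmaT_coimp a b : sigmaT (ci a b) = wcoimp (M (subT h)) (sigmaT a) (sigmaT b).
Proof.
  apply sigmaT_ext. intros [P HP]. unfold sigma, tP; simpl. split.
  - intros E Hall. destruct (separate_S P HP a b E) as [Q [HQ [Qa [nQb HS]]]].
    apply (Hall (exist _ Q HQ)); [exact HS | simpl; auto].
  - intro E. apply NNPP. intro nE. apply E. intros [Q HQ] SPQ [Qa nQb].
    exact (nE (SPQ a b Qa nQb)).
Qed.

Lemma sigmaT_inj a b : sigmaT a = sigmaT b -> a = b.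
Proof.
  intro E. assert (Es : sigma a = sigma b) by exact (f_equal (@proj1_sig _ _) E).
  assert (Le : forall x y, sigma x = sigma y -> le x y).
  { intros x y Exy. apply NNPP. intro nle. destruct (separate_le x y nle) as [P [HP [Px nPy]]].
    apply nPy. change (sigma y (exist _ P HP)). rewrite <- Exy. exact Px. }
  apply (le_antisym HL); apply Le; auto.
Qed.

Lemma weval_sigmaT (v : nat -> A) t :
  weval (M (subT h)) (fun k => sigmaT (v k)) t = sigmaT (weval A v t).
Proof.
  induction t; simpl; try rewrite IHt1, IHt2; symmetry.
  - reflexivity.
  - apply sigmaT_meet.
  - apply sigmaT_join.
  - apply sigmaT_imp.
  - apply sigmaT_coimp.
  - apply sigmaT_zero.
  - apply sigmaT_one.
Qed.
End Representation.

(** * Defining box^k (x <-> y) <= u <-> v by WHB-equations *)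

(* A pair [(X, Y)] stands for the tense clause [X \/ ~ Y] and a list for the meet of its
   clauses.  In [M(B)], [G (X \/ ~ Y) = Y -> X] and [H (X \/ ~ Y) = ~ (Y <- X)], so
   [boxn_clauses k] encodes [box^k (x <-> y)] by WHB-terms, and [le_clauses l p q] lists
   WHB-equations equivalent to [p /\ l <= q] (see [le_meet_clause]). *)
Definition clause_G (c : wterm * wterm) : wterm * wterm := (WImp (snd c) (fst c), WOne).
Definition clause_H (c : wterm * wterm) : wterm * wterm := (WZero, WCoimp (snd c) (fst c)).

Definition box_clauses (l : list (wterm * wterm)) : list (wterm * wterm) :=
  l ++ map clause_G l ++ map clause_H l.

Fixpoint boxn_clauses (k : nat) : list (wterm * wterm) :=
  match k with
  | O => [(WVar 0, WVar 1); (WVar 1, WVar 0)]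
  | S k => box_clauses (boxn_clauses k)
  end.

Fixpoint le_clauses (l : list (wterm * wterm)) (p q : wterm) : list (wterm * wterm) :=
  match l with
  | [] => [(WMeet p q, p)]
  | (X, Y) :: l => le_clauses l (WMeet p X) q ++ le_clauses l p (WJoin q Y)
  end.

Definition zeta (k : nat) : list (wterm * wterm) :=
  le_clauses (boxn_clauses k) (WVar 2) (WVar 3) ++ le_clauses (boxn_clauses k) (WVar 3) (WVar 2).

Definition holdsW (A : WStr) (v : nat -> A) (e : wterm * wterm) : Prop :=
  weval A v (fst e) = weval A v (snd e).

Section ClauseSemantics.
Context (B : TStr) (HT : isTense B).
Let HB := proj1 HT.
Let HL := boolean_lattice B HB.
Let Hmc := boolean_meet_compl B HB.
Let Hjc := boolean_join_compl B HB.
Local Notation m := (tmeet B).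
Local Notation jn := (tjoin B).
Local Notation n := (tneg B).
Variable v : nat -> B.
Local Notation ev := (weval (M B) v).

Definition clause_sem (c : wterm * wterm) : B := jn (ev (fst c)) (n (ev (snd c))).

Fixpoint clauses_sem (l : list (wterm * wterm)) : B :=
  match l with [] => tone B | c :: l => m (clause_sem c) (clauses_sem l) end.

Lemma clauses_sem_app l1 l2 : clauses_sem (l1 ++ l2) = m (clauses_sem l1) (clauses_sem l2).
Proof.
  induction l1 as [| c l1 IH]; simpl.
  - rewrite (meetC HL), (meet1 HL). reflexivity.
  - rewrite IH, (meetA HL). reflexivity.
Qed.

Lemma clauses_sem_G l : clauses_sem (map clause_G l) = tG B (clauses_sem l).
Proof.
  induction l as [| [X Y] l IH]; simpl; [symmetry; apply (G1 B HT) |].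
  rewrite IH, (GM B HT). unfold clause_sem; simpl.
  rewrite (compl1 HL Hmc Hjc), (join0 HL), (joinC HL (ev X)). reflexivity.
Qed.

Lemma clauses_sem_H l : clauses_sem (map clause_H l) = tH B (clauses_sem l).
Proof.
  induction l as [| [X Y] l IH]; simpl; [symmetry; apply (H1 B HT) |].
  rewrite IH, (HM B HT). unfold clause_sem, tP; simpl. unfold tP.
  rewrite (joinC HL (tzero B)), (join0 HL), (complK HL Hmc Hjc), (complM HL Hmc Hjc).
  rewrite (complK HL Hmc Hjc), (joinC HL (ev X)). reflexivity.
Qed.

Lemma clauses_sem_boxn k : clauses_sem (boxn_clauses k) = boxn B k (tbiimp B (v 0) (v 1)).
Proof.
  induction k as [| k IH]; simpl.
  - unfold clause_sem, tbiimp, biimp; simpl.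
    rewrite (meet1 HL), (joinC HL (v 0)), (joinC HL (v 1)). apply (meetC HL).
  - unfold box_clauses. rewrite !clauses_sem_app, clauses_sem_G, clauses_sem_H, IH. reflexivity.
Qed.

Lemma le_clauses_sem l p q :
  Forall (holdsW (M B) v) (le_clauses l p q) <-> le m (m (ev p) (clauses_sem l)) (ev q).
Proof.
  revert p q. induction l as [| [X Y] l IH]; intros p q; simpl.
  - rewrite Forall_cons_iff, (meet1 HL). unfold holdsW; simpl. split; [tauto |].
    intro E. split; [exact E | constructor].
  - rewrite Forall_app, !IH. symmetry. apply (le_meet_clause HL Hmc Hjc).
Qed.

Lemma zeta_sem k : Forall (holdsW (M B) v) (zeta k) <->
  le m (boxn B k (tbiimp B (v 0) (v 1))) (tbiimp B (v 2) (v 3)).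
Proof.
  unfold zeta, tbiimp. rewrite Forall_app, !le_clauses_sem, clauses_sem_boxn, (le_biimp HL Hmc Hjc).
  reflexivity.
Qed.
End ClauseSemantics.

Section ClausesCongruence.
Context (A : WStr) (HW : isWHB A).
Let HL := whb_lattice A HW.
Local Notation m := (wmeet A).
Local Notation j := (wjoin A).
Local Notation i := (wimp A).
Variable r : A -> A -> Prop.
Hypothesis Hr : congW A r.
Let r_refl := proj1 (proj1 Hr).
Let r_sym := proj1 (proj2 (proj1 Hr)).
Let r_trans := proj2 (proj2 (proj1 Hr)).
Let r_meet := proj1 (proj2 Hr).
Let r_join := proj1 (proj2 (proj2 Hr)).
Let r_imp := proj1 (proj2 (proj2 (proj2 Hr))).
Let r_coimp := proj2 (proj2 (proj2 (proj2 Hr))).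

Definition le_mod x y := r (m x y) x.

Lemma le_mod_of_le x y : le m x y -> le_mod x y.
Proof. unfold le_mod, le. intros ->. apply r_refl. Qed.

Lemma le_mod_trans x y w : le_mod x y -> le_mod y w -> le_mod x w.
Proof.
  unfold le_mod. intros E1 E2. apply (r_trans _ (m (m x y) w)).
  - apply r_meet; [apply r_sym, E1 | apply r_refl].
  - rewrite <- (meetA HL). apply (r_trans _ (m x y)); [| exact E1].
    apply r_meet; [apply r_refl | exact E2].
Qed.

Lemma le_mod_meet x y w : le_mod x y -> le_mod x w -> le_mod x (m y w).
Proof.
  unfold le_mod. intros E1 E2. rewrite (meetA HL). apply (r_trans _ (m x w)); [| exact E2].
  apply r_meet; [exact E1 | apply r_refl].
Qed.

Lemma le_mod_join x y w : le_mod x w -> le_mod y w -> le_mod (j x y) w.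
Proof. unfold le_mod. intros E1 E2. rewrite (meetJl HL). apply r_join; assumption. Qed.

Variable v : nat -> A.
Local Notation ev := (weval A v).

Definition clause_valid (c : wterm * wterm) : Prop := le_mod (ev (snd c)) (ev (fst c)).

Lemma box_clauses_valid l : Forall clause_valid l -> Forall clause_valid (box_clauses l).
Proof.
  intro F. unfold box_clauses. rewrite !Forall_app, !Forall_map.
  split; [exact F | split]; apply (Forall_impl _ (P := clause_valid)); auto;
    intros [X Y] E; unfold clause_valid, le_mod in *; simpl in *.
  - rewrite (meetC HL), (meet1 HL).
    apply (r_trans _ (i (ev Y) (ev Y))); [| rewrite (impxx A HW); apply r_refl].
    replace (i (ev Y) (ev X)) with (i (ev Y) (m (ev Y) (ev X)))
      by (rewrite (impM A HW), (impxx A HW), (meetC HL), (meet1 HL); reflexivity).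
    apply r_imp; [apply r_refl | exact E].
  - rewrite (meet0 HL). apply r_sym.
    rewrite <- (coimp_le0 A HW _ _ (leMr HL (ev Y) (ev X))).
    apply r_coimp; [apply r_sym, E | apply r_refl].
Qed.

Lemma le_clauses_le_mod l p q : Forall clause_valid l ->
  Forall (holdsW A v) (le_clauses l p q) -> le_mod (ev p) (ev q).
Proof.
  revert p q. induction l as [| [X Y] l IH]; intros p q FV FC; simpl in FC.
  - inversion FC as [| ? ? E _]. apply le_mod_of_le, E.
  - rewrite Forall_app in FC. destruct FC as [F1 F2].
    inversion FV as [| ? ? VXY FV']. unfold clause_valid in VXY; simpl in VXY.
    pose proof (IH _ _ FV' F1) as IH1. pose proof (IH _ _ FV' F2) as IH2. simpl in IH1, IH2.
    apply (le_mod_trans _ (m (ev p) (j (ev q) (ev Y)))).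
    { apply le_mod_meet; [apply le_mod_of_le, (le_refl HL) | exact IH2]. }
    apply (le_mod_trans _ (m (ev p) (j (ev q) (ev X)))).
    { apply le_mod_meet; [apply le_mod_of_le, (leMl HL) |].
      apply (le_mod_trans _ (j (ev q) (ev Y))); [apply le_mod_of_le, (leMr HL) |].
      apply le_mod_join; [apply le_mod_of_le, (leJl HL) |].
      apply (le_mod_trans _ (ev X)); [exact VXY | apply le_mod_of_le, (leJr HL)]. }
    rewrite (meetJr HL). apply le_mod_join; [apply le_mod_of_le, (leMr HL) | exact IH1].
Qed.
End ClausesCongruence.

Lemma zeta_CgW (A : WStr) (HW : isWHB A) k a b c d :
  Forall (holdsW A (val4 a b c d)) (zeta k) -> CgW A a b c d.
Proof.
  intros F r Hr Rab. pose proof (whb_lattice A HW) as HL.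
  pose proof Hr as [[r_refl [r_sym r_trans]] [r_meet _]].
  assert (FV : Forall (clause_valid A r (val4 a b c d)) (boxn_clauses k)).
  { clear F. induction k as [| k IH]; simpl.
    - repeat constructor; unfold clause_valid, le_mod; simpl.
      + rewrite <- (meetxx HL b) at 2. apply r_meet; [apply r_refl | exact Rab].
      + rewrite <- (meetxx HL a) at 2. apply r_meet; [apply r_refl | apply r_sym, Rab].
    - apply (box_clauses_valid A HW r Hr), IH. }
  unfold zeta in F. rewrite Forall_app in F. destruct F as [F1 F2].
  pose proof (le_clauses_le_mod A HW r Hr _ _ _ _ FV F1) as L1.
  pose proof (le_clauses_le_mod A HW r Hr _ _ _ _ FV F2) as L2.
  unfold le_mod in L1, L2; simpl in L1, L2.
  apply (r_trans _ (wmeet A c d)); [apply r_sym, L1 | rewrite (meetC HL); exact L2].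
Qed.

(** * Transfer between K and N *)

Fixpoint tterm_of (t : wterm) : tterm :=
  match t with
  | WVar k => TVar k
  | WMeet s u => TMeet (tterm_of s) (tterm_of u)
  | WJoin s u => TJoin (tterm_of s) (tterm_of u)
  | WImp s u => TGt (TJoin (TNeg (tterm_of s)) (tterm_of u))
  | WCoimp s u => TNeg (THt (TNeg (TMeet (tterm_of s) (TNeg (tterm_of u)))))
  | WZero => TZero
  | WOne => TOne
  end.

Lemma teval_tterm_of (C : TStr) (v : nat -> C) t : teval C v (tterm_of t) = weval (M C) v t.
Proof. induction t; simpl; try rewrite IHt1, IHt2; reflexivity. Qed.

Section MCongruence.
Context (C : TStr) (HT : isTense C).
Let HB := proj1 HT.
Let HL := boolean_lattice C HB.
Let Hmc := boolean_meet_compl C HB.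
Let Hjc := boolean_join_compl C HB.
Local Notation m := (tmeet C).
Local Notation jn := (tjoin C).
Local Notation n := (tneg C).

Lemma congW_M_neg r : congW (M C) r -> forall x y, r x y -> r (n x) (n y).
Proof.
  intros [[r_refl [r_sym r_trans]] [r_meet [r_join _]]].
  assert (Half : forall x y, r x y -> r (n x) (m (n x) (n y))).
  { intros x y Rxy. rewrite <- (meet1 HL (n x)) at 1. rewrite <- (Hjc y), (meetJr HL).
    apply (r_trans _ (jn (m (n x) x) (m (n x) (n y)))).
    - apply r_join; apply r_meet; auto.
    - rewrite (meetC HL _ x), Hmc, (joinC HL), (join0 HL). apply r_refl. }
  intros x y Rxy. apply (r_trans _ (m (n x) (n y))); [apply Half, Rxy |].
  rewrite (meetC HL). apply r_sym, Half, r_sym, Rxy.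
Qed.

Lemma congT_M r : congT C r <-> congW (M C) r.
Proof.
  split.
  - intros [[r_refl [r_sym r_trans]] [r_meet [r_join [r_neg [r_G r_H]]]]].
    repeat split; simpl; unfold tP; eauto 8.
  - intro Hr. pose proof (congW_M_neg r Hr) as r_neg.
    destruct Hr as [[r_refl [r_sym r_trans]] [r_meet [r_join [r_imp r_coimp]]]]; simpl in *.
    repeat split; eauto.
    (* In [M(C)], [G a = 1 -> a] and [H a = ~ (~ a <- 0)]. *)
    + intros a b Rab. pose proof (r_imp _ _ _ _ (r_refl (tone C)) Rab) as Q.
      rewrite (compl1 HL Hmc Hjc), !(joinC HL (tzero C)), !(join0 HL) in Q. exact Q.
    + intros a b Rab.
      pose proof (r_neg _ _ (r_coimp _ _ _ _ (r_neg _ _ Rab) (r_refl (tzero C)))) as Q.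
      unfold tP in Q. rewrite (compl0 HL Hmc Hjc), !(meet1 HL), !(complK HL Hmc Hjc) in Q. exact Q.
Qed.

Lemma CgT_M a b c d : CgT C a b c d <-> CgW (M C) a b c d.
Proof.
  split; intros Cg r Hr; apply Cg; apply (congT_M r); exact Hr.
Qed.
End MCongruence.

Lemma congW_comap (A : WStr) (HW : isWHB A) (h : closedT (PT A) (@clopen A))
  (r : subT h -> subT h -> Prop) :
  congT (subT h) r -> congW A (fun x y => r (sigmaT A h x) (sigmaT A h y)).
Proof.
  intros [[r_refl [r_sym r_trans]] [r_meet [r_join [r_neg [r_G r_H]]]]].
  repeat split; intros.
  - apply r_refl.
  - apply r_sym; assumption.
  - eapply r_trans; eassumption.
  - rewrite !(sigmaT_meet A HW). apply r_meet; assumption.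
  - rewrite !(sigmaT_join A HW). apply r_join; assumption.
  - rewrite !(sigmaT_imp A HW). apply r_G, r_join; [apply r_neg |]; assumption.
  - rewrite !(sigmaT_coimp A HW). apply r_neg, r_H, r_neg, r_meet; [| apply r_neg]; assumption.
Qed.

Lemma CgW_zeta N (HN : varietyT N) k
  (Hk : forall B, N B -> forall x : B, le (tmeet B) (boxn B k x) (boxn B (S k) x))
  (A : WStr) (HW : isWHB A) (TA : T_in N A) a b c d :
  CgW A a b c d -> Forall (holdsW A (val4 a b c d)) (zeta k).
Proof.
  intro Cg. destruct TA as [h NB]. set (B := subT h) in *.
  assert (HT : isTense B) by exact (varietyT_isTense N HN B NB).
  pose proof (boolean_lattice B (proj1 HT)) as HL.
  set (s := sigmaT A h).
  set (u := tbiimp B (s a) (s b)).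
  assert (Hcd : Cg_box B u (s c) (s d)).
  { apply (Cg (fun x y => Cg_box B u (s x) (s y))).
    - apply (congW_comap A HW h), (Cg_box_cong B HT).
    - exists 0. apply (le_refl HL). }
  destruct Hcd as [l E].
  set (v := fun i => s (val4 a b c d i)).
  assert (Fv : Forall (holdsW (M B) v) (zeta k)).
  { apply (zeta_sem B HT v k). eapply (le_trans HL); [| exact E].
    apply (boxn_stable B HT k (Hk B NB)). }
  apply (Forall_impl _ (P := holdsW (M B) v)); [| exact Fv].
  intros e He. unfold holdsW in *. unfold v in He. rewrite !(weval_sigmaT A HW h) in He.
  exact (sigmaT_inj A HW h _ _ He).
Qed.

Theorem proposition6p21 (K : WStr -> Prop) (N : TStr -> Prop) :
  varietyW K -> varietyT N -> tense_companion K N ->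
  (EDPC_W K <-> EDPC_T N).
Proof.
  intros HK HN [TK MN].
  assert (KW : forall A, K A -> isWHB A) by (destruct HK as [E HE]; intros A KA; apply HE, KA).
  split.
  - intros [zw Hw]. exists (map (fun e => (tterm_of (fst e), tterm_of (snd e))) zw).
    intros C NC a b c d.
    rewrite (CgT_M C (varietyT_isTense N HN C NC)), (Hw (M C) (MN C NC)), Forall_map.
    split; apply Forall_impl; intro e; simpl; rewrite !teval_tterm_of; auto.
  - intro ET. destruct (EDPC_T_boxn_bound N HN ET) as [k Hk]. exists (zeta k).
    intros A KA a b c d. split.
    + apply (CgW_zeta N HN k Hk A (KW A KA) (TK A KA)).
    + apply (zeta_CgW A (KW A KA)).
Qed.
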